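(* For every integer $r\ge 1$, the set $R_r$ is high above the set $L_r$.
   Context: Define finite sets $P_r\subset\mathbb{Z}^2$ for integers $r\ge 0$ recursively: $P_0:=\{(0,0)\}$; for $r\ge 1$, $L_r:=P_{r-1}$, $R_r:=\{(x+\delta_r,\,y+\delta_r'):(x,y)\in L_r\}$ and $P_r:=L_r\cup R_r$, where $\delta_r:=3\cdot 4^{r-1}$ and $\delta_r':=(3r+1)\cdot 4^{r-1}$. For finite point sets $X,Y$ in the plane, $X$ is said to be high above $Y$ if every line determined by two points of $X$ lies strictly above every point of $Y$, and every line determined by two points of $Y$ lies strictly below every point of $X$ (the conditions are vacuous when the respective set has fewer than two points). *)

From Stdlib Require Import ZArith List.
Open Scope Z_scope.

Definition point := (Z * Z)%type.

Fixpoint P (r : nat) : list point :=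
  match r with
  | O => (0, 0) :: nil
  | S r' =>
      let L := P r' in
      let d := 3 * 4 ^ Z.of_nat r' in
      let d' := (3 * Z.of_nat r + 1) * 4 ^ Z.of_nat r' in
      L ++ map (fun p => (fst p + d, snd p + d')) L
  end.

Definition L (r : nat) : list point := P (Nat.pred r).
Definition delta (r : nat) : Z := 3 * 4 ^ (Z.of_nat r - 1).
Definition delta' (r : nat) : Z := (3 * Z.of_nat r + 1) * 4 ^ (Z.of_nat r - 1).
Definition R (r : nat) : list point :=
  map (fun p => (fst p + delta r, snd p + delta' r)) (L r).

(* The line through distinct points a, b (non-vertical) lies strictly above q:
   the line's ordinate at abscissa q.x exceeds q.y.  A vertical line is never
   "above" a point (not needed here: all points involved have distinct x). *)
Definition line_above (a b q : point) : Prop :=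
  fst a <> fst b /\
  (fst b - fst a) * (snd q - snd a) * (fst b - fst a) <
  (snd b - snd a) * (fst q - fst a) * (fst b - fst a).

Definition line_below (a b q : point) : Prop :=
  fst a <> fst b /\
  (snd b - snd a) * (fst q - fst a) * (fst b - fst a) <
  (fst b - fst a) * (snd q - snd a) * (fst b - fst a).

Definition high_above (X Y : list point) : Prop :=
  (forall a b q, In a X -> In b X -> a <> b -> In q Y -> line_above a b q) /\
  (forall a b q, In a Y -> In b Y -> a <> b -> In q X -> line_below a b q).

(** All lines spanned by [P_m] have slope less than [k = N + 1] for every
    [N >= m], and the quantity [k x - y] ("level") separates the two halves:
    with [e = 4^(r-1)] and [k = r], the points of [L_r] have level in
    [[0, e - k]], while the translation by [(delta_r, delta'_r)] lowers levels
    by [e], so the points of [R_r] have level in [[-e, -k]].  Since moreover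
    [R_r] lies strictly to the right of [L_r], a line of slope [< k] through a
    point of higher (lower) level passes above (below) every point of lower
    (higher) level on the appropriate side. *)
From Stdlib Require Import ZArith List Lia.
Open Scope Z_scope.

Definition level (k : Z) (p : point) : Z := k * fst p - snd p.

Definition slope_lt (k : Z) (a b : point) : Prop :=
  0 < (fst b - fst a) * (k * (fst b - fst a) - (snd b - snd a)).

Definition shift (d d' : Z) (p : point) : point := (fst p + d, snd p + d').

Lemma slope_lt_sym k a b : slope_lt k a b -> slope_lt k b a.
Proof. unfold slope_lt; nia. Qed.

Lemma slope_lt_of_level k a b :
  fst a < fst b -> level k a < level k b -> slope_lt k a b.
Proof. unfold slope_lt, level; nia. Qed.

Lemma slope_lt_shift k d d' a b :
  slope_lt k (shift d d' a) (shift d d' b) <-> slope_lt k a b.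
Proof.
  unfold slope_lt, shift; cbn [fst snd].
  replace (fst b + d - (fst a + d)) with (fst b - fst a) by ring.
  replace (snd b + d' - (snd a + d')) with (snd b - snd a) by ring.
  reflexivity.
Qed.

Lemma level_shift k d d' p : level k (shift d d' p) = level k p + (k * d - d').
Proof. unfold level, shift; cbn [fst snd]; ring. Qed.

Lemma line_above_of_slope_lt k a b q :
  slope_lt k a b -> fst q < fst a -> level k a <= level k q -> line_above a b q.
Proof.
  unfold slope_lt, level, line_above.
  set (dx := fst b - fst a); set (dy := snd b - snd a).
  intros Hslope Hleft Hlevel; split; [nia|].
  set (G := fst q - fst a); set (E := level k q - level k a).
  assert (Hy : snd q - snd a = k * G - E) by (unfold G, E, level; ring).
  rewrite Hy.
  assert (dx * (k * dx - dy) * G < 0) by (apply Z.mul_pos_neg; unfold G; lia).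
  assert (0 <= dx * dx * E) by (apply Z.mul_nonneg_nonneg; [nia | unfold E, level; lia]).
  nia.
Qed.

Lemma line_below_of_slope_lt k a b q :
  slope_lt k a b -> fst a < fst q -> level k q <= level k a -> line_below a b q.
Proof.
  unfold slope_lt, level, line_below.
  set (dx := fst b - fst a); set (dy := snd b - snd a).
  intros Hslope Hright Hlevel; split; [nia|].
  set (G := fst q - fst a); set (E := level k q - level k a).
  assert (Hy : snd q - snd a = k * G - E) by (unfold G, E, level; ring).
  rewrite Hy.
  assert (0 < dx * (k * dx - dy) * G) by (apply Z.mul_pos_pos; unfold G; lia).
  assert (dx * dx * E <= 0) by (apply Z.mul_nonneg_nonpos; [nia | unfold E, level; lia]).
  nia.
Qed.

Lemma high_above_of_level_separation (k : Z) (X Y : list point) :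
  (forall a b, In a X -> In b X -> a <> b -> slope_lt k a b) ->
  (forall a b, In a Y -> In b Y -> a <> b -> slope_lt k a b) ->
  (forall a q, In a X -> In q Y -> fst q < fst a /\ level k a <= level k q) ->
  high_above X Y.
Proof.
  intros HX HY Hsep; split.
  - intros a b q Ha Hb Hab Hq.
    destruct (Hsep a q Ha Hq).
    apply (line_above_of_slope_lt k); auto.
  - intros a b q Ha Hb Hab Hq.
    destruct (Hsep q a Hq Ha).
    apply (line_below_of_slope_lt k); auto.
Qed.

Lemma P_S m :
  P (S m) = P m ++ map (shift (3 * 4 ^ Z.of_nat m)
                               ((3 * Z.of_nat (S m) + 1) * 4 ^ Z.of_nat m)) (P m).
Proof. reflexivity. Qed.

Lemma In_P_S m p :
  In p (P (S m)) ->
  In p (P m) \/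
  exists p0, p = shift (3 * 4 ^ Z.of_nat m)
                       ((3 * Z.of_nat (S m) + 1) * 4 ^ Z.of_nat m) p0 /\ In p0 (P m).
Proof.
  rewrite P_S; intros Hp; apply in_app_or in Hp as [Hp|Hp]; [now left|right].
  apply in_map_iff in Hp as [p0 [<- Hp0]]; eauto.
Qed.

Lemma P_bounds N m p : (m <= N)%nat -> In p (P m) ->
  0 <= fst p <= 4 ^ Z.of_nat m - 1 /\
  0 <= level (Z.of_nat N + 1) p
    <= 4 ^ Z.of_nat m * (Z.of_nat N - Z.of_nat m + 1) - (Z.of_nat N + 1).
Proof.
  revert p; induction m as [|m IH]; intros p Hm Hp.
  - destruct Hp as [<-|[]]; unfold level; cbn [fst snd Z.of_nat]; rewrite Z.pow_0_r; lia.
  - rewrite Nat2Z.inj_succ, Z.pow_succ_r by lia.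
    assert (He : 0 < 4 ^ Z.of_nat m) by (apply Z.pow_pos_nonneg; lia).
    destruct (In_P_S m p Hp) as [Hp0|[p0 [-> Hp0]]];
      destruct (IH _ ltac:(lia) Hp0) as [Hx Hlev].
    + split; [lia | nia].
    + rewrite level_shift; unfold shift; cbn [fst]; rewrite Nat2Z.inj_succ.
      split; [lia | nia].
Qed.

Lemma P_slope_lt N m a b : (m <= N)%nat -> In a (P m) -> In b (P m) -> a <> b ->
  slope_lt (Z.of_nat N + 1) a b.
Proof.
  revert a b; induction m as [|m IH]; intros a b Hm Ha Hb Hab.
  - destruct Ha as [<-|[]]; destruct Hb as [<-|[]]; contradiction.
  - assert (Hcross : forall a b0, In a (P m) -> In b0 (P m) ->
      slope_lt (Z.of_nat N + 1) a
        (shift (3 * 4 ^ Z.of_nat m) ((3 * Z.of_nat (S m) + 1) * 4 ^ Z.of_nat m) b0)).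
    { intros a' b0 Ha' Hb0.
      destruct (P_bounds N m a' ltac:(lia) Ha') as [Hxa Hla].
      destruct (P_bounds N m b0 ltac:(lia) Hb0) as [Hxb Hlb].
      apply slope_lt_of_level; rewrite ?level_shift; unfold shift; cbn [fst];
        nia. }
    destruct (In_P_S m a Ha) as [Ha0|[a0 [-> Ha0]]];
      destruct (In_P_S m b Hb) as [Hb0|[b0 [-> Hb0]]].
    + apply IH; auto; lia.
    + apply Hcross; assumption.
    + apply slope_lt_sym, Hcross; assumption.
    + apply slope_lt_shift, IH; auto; [lia | congruence].
Qed.

Theorem lemma4 : forall r : nat, (1 <= r)%nat -> high_above (R r) (L r).
Proof.
  intros [|n] Hr; [lia|].
  assert (HR : R (S n) = map (shift (3 * 4 ^ Z.of_nat n)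
                                     ((3 * Z.of_nat (S n) + 1) * 4 ^ Z.of_nat n)) (P n)).
  { unfold R, L, delta, delta'; cbn [Nat.pred].
    now replace (Z.of_nat (S n) - 1) with (Z.of_nat n) by lia. }
  change (L (S n)) with (P n); rewrite HR.
  assert (He : 0 < 4 ^ Z.of_nat n) by (apply Z.pow_pos_nonneg; lia).
  apply (high_above_of_level_separation (Z.of_nat n + 1)).
  - intros a b Ha Hb Hab.
    apply in_map_iff in Ha as [a0 [<- Ha0]]; apply in_map_iff in Hb as [b0 [<- Hb0]].
    apply slope_lt_shift, (P_slope_lt n n); auto; congruence.
  - intros a b; apply P_slope_lt; lia.
  - intros a q Ha Hq.
    apply in_map_iff in Ha as [a0 [<- Ha0]].
    destruct (P_bounds n n a0 ltac:(lia) Ha0) as [Hxa Hla].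
    destruct (P_bounds n n q ltac:(lia) Hq) as [Hxq Hlq].
    rewrite level_shift; unfold shift; cbn [fst]; rewrite Nat2Z.inj_succ; lia.
Qed.
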